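(* Let $A\subseteq\mathcal{R}$ be outer measurable and let $(I_n)_{n\ge1}$ be pairwise disjoint intervals in $\mathcal{R}$ with $\lim_{n\to\infty}l(I_n)=0$. Then $A\setminus\bigcup_{n=1}^\infty I_n$ is outer measurable, the limit $\lim_{k\to\infty}M_u\big(A\setminus\bigcup_{n=1}^k I_n\big)$ exists in $\mathcal{R}$, and $$M_u\Big(A\setminus\bigcup_{n=1}^\infty I_n\Big)=\lim_{k\to\infty}M_u\Big(A\setminus\bigcup_{n=1}^k I_n\Big).$$
   Context: $\mathcal{R}$ denotes the Levi-Civita field: functions $x:\mathbb{Q}\to\mathbb{R}$ with left-finite support, with componentwise addition and formal power series multiplication, ordered by $x>0$ iff $x\ne0$ and $x[\min\operatorname{supp}x]>0$; it is a non-Archimedean ordered field extension of $\mathbb{R}$, Cauchy complete in the order topology, in which all limits and series are taken (a series $\sum a_n$ converges iff $a_n\to0$). An interval is a set $[a,b],[a,b),(a,b]$ or $(a,b)$ with $a<b$ in $\mathcal{R}$, of length $l=b-a$. A cover of $A\subseteq\mathcal{R}$ is a sequence of intervals $(S_n)_{n\ge1}$ with $A\subseteq\bigcup_n S_n$ and $\sum_n l(S_n)$ convergent in $\mathcal{R}$. $A$ is called outer measurable if the infimum $\inf\{\sum_n l(S_n): (S_n)\text{ a cover of }A\}$ exists in $\mathcal{R}$; this infimum is then called the outer measure $M_u(A)$. (For an outer measurable $A$ and finitely many intervals, $A\setminus\bigcup_{n=1}^k I_n$ is outer measurable.) *)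

From mathcomp Require Import all_boot all_order all_algebra.
From mathcomp Require Import all_classical all_reals.
Set Implicit Arguments. Unset Strict Implicit. Unset Printing Implicit Defensive.
Import Order.TTheory GRing.Theory Num.Theory.
Local Open Scope ring_scope.
Local Open Scope classical_set_scope.

(* The Levi-Civita field over the reals R (any realType):              *)
(* functions x : rat -> R with left-finite support, i.e. for every q   *)

Definition left_finite (R : realType) (x : rat -> R) : Prop :=
  forall q : rat, finite_set [set t : rat | t < q /\ x t != 0].

Record LC (R : realType) := MkLC {
  lc_fun :> rat -> R ;
  lc_lf : left_finite lc_fun }.

Section LCops.
Variable R : realType.

Lemma left_finite0 : left_finite (fun _ : rat => (0 : R)).
Proof.
move=> q; apply: sub_finite_set (finite_set0 rat).
by move=> t [_]; rewrite eqxx.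
Qed.

Lemma left_finiteD (x y : LC R) : left_finite (fun t => x t + y t).
Proof.
move=> q; apply: (@sub_finite_set _ _
  ([set t | t < q /\ x t != 0] `|` [set t | t < q /\ y t != 0])).
  move=> t [tq]; have [x0|x0] := eqVneq (x t) 0.
    by rewrite x0 add0r => ?; right.
  by move=> _; left.
by rewrite finite_setU; split; apply: lc_lf.
Qed.

Lemma left_finiteN (x : LC R) : left_finite (fun t => - x t).
Proof.
move=> q; apply: (@sub_finite_set _ _ [set t | t < q /\ x t != 0]).
  by move=> t [tq]; rewrite oppr_eq0.
exact: lc_lf.
Qed.

Definition lc_zero : LC R := MkLC left_finite0.
Definition lc_add (x y : LC R) : LC R := MkLC (left_finiteD x y).
Definition lc_opp (x : LC R) : LC R := MkLC (left_finiteN x).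
Definition lc_sub (x y : LC R) : LC R := lc_add x (lc_opp y).

Definition lc_pos (x : LC R) : Prop :=
  exists t : rat, 0 < x t /\ forall s : rat, s < t -> x s = 0.

Definition lc_lt (x y : LC R) : Prop := lc_pos (lc_sub y x).
Definition lc_le (x y : LC R) : Prop := lc_lt x y \/ x = y.

(* Convergence of a sequence in the order topology of the field
   (the field has no endpoints, so open intervals (a,b) form a basis). *)
Definition lc_cvg (u : nat -> LC R) (L : LC R) : Prop :=
  forall a b : LC R, lc_lt a L -> lc_lt L b ->
    exists N : nat, forall n : nat, (N <= n)%N -> lc_lt a (u n) /\ lc_lt (u n) b.

Fixpoint lc_psum (u : nat -> LC R) (N : nat) : LC R :=
  match N with
  | 0%N => lc_zero
  | N'.+1 => lc_add (lc_psum u N') (u N')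
  end.

Definition lc_series_to (u : nat -> LC R) (s : LC R) : Prop :=
  lc_cvg (lc_psum u) s.

Record lc_interval := MkItv {
  itv_a : LC R ;
  itv_b : LC R ;
  itv_lclosed : bool ;
  itv_rclosed : bool ;
  itv_lt : lc_lt itv_a itv_b }.

Definition itv_set (I : lc_interval) : set (LC R) :=
  [set x | (if itv_lclosed I then lc_le (itv_a I) x else lc_lt (itv_a I) x) /\
           (if itv_rclosed I then lc_le x (itv_b I) else lc_lt x (itv_b I))].

Definition itv_len (I : lc_interval) : LC R := lc_sub (itv_b I) (itv_a I).

Definition cover_with_sum (A : set (LC R)) (S : nat -> lc_interval) (s : LC R) :=
  A `<=` \bigcup_n itv_set (S n) /\ lc_series_to (fun n => itv_len (S n)) s.

Definition is_infimum (E : set (LC R)) (m : LC R) : Prop :=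
  (forall s, E s -> lc_le m s) /\
  (forall m', (forall s, E s -> lc_le m' s) -> lc_le m' m).

Definition Mu_is (A : set (LC R)) (m : LC R) : Prop :=
  is_infimum [set s | exists S, cover_with_sum A S s] m.

Definition outer_measurable (A : set (LC R)) : Prop := exists m, Mu_is A m.

End LCops.

(* The order of the Levi-Civita field is lexicographic, so two elements are
   close exactly when they agree on an initial segment (-oo, q] of exponents:
   a sequence converges iff it eventually agrees with its limit on every such
   segment, a series converges as soon as its terms tend to 0, and a set [E]
   has an infimum as soon as, for every [q], some lower bound of [E] agrees up
   to [q] with some element of [E].
   Write [A_k] for [A] minus the intervals [I_0, ..., I_k] and [B] for [A]
   minus all of them.  Then [B ⊆ A_k ⊆ B ∪ ⋃_(n > k) I_n], and the tail
   intervals form a cover of total length [t_k -> 0].  Hence [M_u(A_k) - t_k]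
   is a lower bound for the cover sums of [B] which, as [k] grows, agrees
   ever further with [M_u(A_k)] and with cover sums of [B]; this yields both
   [M_u(B)] and [M_u(A_k) -> M_u(B)].  The same idea, applied to a near-optimal
   cover of [A] cut at the endpoints of one interval, shows that removing an
   interval preserves outer measurability. *)

From HB Require Import structures.
From mathcomp Require Import all_boot all_order all_algebra.
From mathcomp Require Import all_classical all_reals.
From mathcomp Require Import lra.
Set Implicit Arguments. Unset Strict Implicit. Unset Printing Implicit Defensive.
Import Order.TTheory GRing.Theory Num.Theory.
Local Open Scope ring_scope.
Local Open Scope order_scope.
Local Open Scope classical_set_scope.

Lemma seq_has_min d (T : orderType d) (s : seq T) :
  s != [::] -> exists2 m, m \in s & {in s, forall y, m <= y}.
Proof.
elim: s => // a [|b s] IH _.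
  by exists a => [|y]; rewrite ?mem_seq1 // => /eqP ->.
have [m ms mm] := IH isT.
exists (Order.min a m) => [|y].
  by rewrite /Order.min; case: ifP => _; rewrite inE ?eqxx ?ms ?orbT.
rewrite inE => /predU1P [->|/mm my]; first by rewrite ge_min lexx.
by rewrite ge_min my orbT.
Qed.

Lemma rat_le_nat (t : rat) : exists n : nat, t <= n%:R.
Proof.
exists (Num.bound `|t|%R); apply: le_trans (ler_norm t) _.
exact/ltW/archi_boundP.
Qed.

Lemma bigcup_le0 T (F : nat -> set T) : \bigcup_(n in [set n | (n <= 0)%N]) F n = F 0%N.
Proof. by rewrite -[[set n | _]]/(`I_1) II1 bigcup_set1. Qed.

Lemma bigcup_leS T (F : nat -> set T) k : \bigcup_(n in [set n | (n <= k.+1)%N]) F n =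
  \bigcup_(n in [set n | (n <= k)%N]) F n `|` F k.+1.
Proof. by rewrite -[[set n | (n <= k.+1)%N]]/(`I_k.+2) IIS bigcup_setU bigcup_set1. Qed.

Lemma setD_bigcup_le_sub T (A : set T) (F : nat -> set T) k :
  A `\` \bigcup_(n in [set n | (n <= k)%N]) F n `<=`
  (A `\` \bigcup_n F n) `|` \bigcup_(n in [set n | (k < n)%N]) F n.
Proof.
move=> x [Ax nFx]; have [[n _ Fnx]|nF] := pselect ((\bigcup_n F n) x); last by left.
by right; exists n => //=; rewrite ltnNge; apply: contra_notN nFx => nk; exists n.
Qed.

Section PossiblyEmptyIntervals.
Context d (T : orderType d).

Record pitv := PItv { pitv_a : T; pitv_b : T; pitv_lc : bool; pitv_rc : bool }.

Definition pitv_set (I : pitv) : set T := [set x |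
  (if pitv_lc I then pitv_a I <= x else pitv_a I < x) /\
  (if pitv_rc I then x <= pitv_b I else x < pitv_b I)].

Definition below (c : T) (hc : bool) : set T := [set x | if hc then x <= c else x < c].
Definition above (c : T) (hc : bool) : set T := [set x | if hc then c < x else c <= x].

Lemma aboveP c hc x : above c hc x <-> ~ below c hc x.
Proof. by rewrite /above /below /=; case: hc; rewrite (ltNge, leNgt); split => /negP. Qed.

Definition pitv_below c hc (I : pitv) := PItv (pitv_a I) (Order.min (pitv_b I) c) (pitv_lc I)
  (if pitv_b I < c then pitv_rc I else if c < pitv_b I then hc else pitv_rc I && hc).

Definition pitv_above c hc (I : pitv) := PItv (Order.max (pitv_a I) c) (pitv_b I)
  (if c < pitv_a I then pitv_lc I else if pitv_a I < c then ~~ hc else pitv_lc I && ~~ hc)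
  (pitv_rc I).

Ltac chain_order := match goal with
 | H : is_true (?a < ?b) |- is_true (?a <= ?b) => exact: ltW H
 | H1 : is_true (?a <= ?b), H2 : is_true (?b <= ?c) |- is_true (?a <= ?c) => exact: le_trans H1 H2
 | H1 : is_true (?a <= ?b), H2 : is_true (?b < ?c) |- is_true (?a < ?c) => exact: le_lt_trans H1 H2
 | H1 : is_true (?a < ?b), H2 : is_true (?b <= ?c) |- is_true (?a < ?c) => exact: lt_le_trans H1 H2
 | H1 : is_true (?a < ?b), H2 : is_true (?b < ?c) |- is_true (?a < ?c) => exact: lt_trans H1 H2
 | H1 : is_true (?a < ?b), H2 : is_true (?b < ?c) |- is_true (?a <= ?c) => exact: ltW (lt_trans H1 H2)
 | H1 : is_true (?a <= ?b), H2 : is_true (?b < ?c) |- is_true (?a <= ?c) => exact: ltW (le_lt_trans H1 H2)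
 | H1 : is_true (?a < ?b), H2 : is_true (?b <= ?c) |- is_true (?a <= ?c) => exact: ltW (lt_le_trans H1 H2)
 end.

Lemma pitv_belowE c hc I x : pitv_set (pitv_below c hc I) x <-> pitv_set I x /\ below c hc x.
Proof.
case: I => a b l r; rewrite /pitv_set /pitv_below /below /Order.min /=.
case: (ltgtP b c) => h; [| |subst c]; case: l; case: r; case: hc => /=;
  split => [[h1 h2]|[[h1 h2] h3]]; (split; [try split|]) => //; try chain_order.
Qed.

Lemma pitv_aboveE c hc I x : pitv_set (pitv_above c hc I) x <-> pitv_set I x /\ above c hc x.
Proof.
case: I => a b l r; rewrite /pitv_set /pitv_above /above /Order.max /=.
case: (ltgtP c a) => h; [| |subst c]; case: l; case: r; case: hc => /=;
  split => [[h1 h2]|[[h1 h2] h3]]; (split; [try split|]) => //; try chain_order.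
Qed.

End PossiblyEmptyIntervals.

Section LeviCivita.
Variable R : realType.
Local Notation LC := (LC R).

Lemma lc_ext (x y : LC) : (forall t, x t = y t) -> x = y.
Proof.
case: x y => f fP [g gP] /= /funext fg; subst g.
by congr MkLC; exact: Prop_irrelevance.
Qed.

HB.instance Definition _ := gen_eqMixin LC.
HB.instance Definition _ := gen_choiceMixin LC.

Lemma lc_addA : associative (@lc_add R).
Proof. by move=> x y z; apply: lc_ext => t /=; rewrite addrA. Qed.
Lemma lc_addC : commutative (@lc_add R).
Proof. by move=> x y; apply: lc_ext => t /=; rewrite addrC. Qed.
Lemma lc_add0 : left_id (lc_zero R) (@lc_add R).
Proof. by move=> x; apply: lc_ext => t /=; rewrite add0r. Qed.
Lemma lc_addN : left_inverse (lc_zero R) (@lc_opp R) (@lc_add R).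
Proof. by move=> x; apply: lc_ext => t /=; rewrite addNr. Qed.

HB.instance Definition _ := GRing.isZmodule.Build LC lc_addA lc_addC lc_add0 lc_addN.

Lemma lc_addE (x y : LC) t : (x + y) t = x t + y t. Proof. by []. Qed.
Lemma lc_oppE (x : LC) t : (- x) t = - x t. Proof. by []. Qed.
Lemma lc_subE (x y : LC) t : (x - y) t = x t - y t. Proof. by []. Qed.
Lemma lc_zeroE t : (0 : LC) t = 0. Proof. by []. Qed.

Definition lex (x y : LC) := exists t, x t < y t /\ forall s, s < t -> x s = y s.

Lemma lex_irr x : ~ lex x x.
Proof. by case=> t []; rewrite ltxx. Qed.

Lemma lex_trans x y z : lex x y -> lex y z -> lex x z.
Proof.
move=> [t1 [l1 e1]] [t2 [l2 e2]].
case: (ltgtP t1 t2) => [h|h|e]; last subst t2.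
- exists t1; split; first by rewrite -(e2 _ h).
  by move=> s st; rewrite e1 // e2 //; apply: lt_trans st h.
- exists t2; split; first by rewrite (e1 _ h).
  by move=> s st; rewrite e1 ?e2 //; apply: lt_trans st h.
- exists t1; split; first exact: lt_trans l1 l2.
  by move=> s st; rewrite e1 ?e2.
Qed.

(* By left-finiteness, the points below [t0 + 1] where [x] and [y] differ form a
   finite set; its least element is the first difference. *)
Lemma lex_total x y : x <> y -> lex x y \/ lex y x.
Proof.
move=> xy; have [t0 xyt0] : exists t, x t != y t.
  apply: contrapT => nxy; apply: xy; apply: lc_ext => t.
  by apply/eqP; apply: contrapT => ne; apply: nxy; exists t; apply/negP.
pose D := [set t | t < t0 + 1 /\ x t != y t].
have fD : finite_set D.
  apply: (@sub_finite_set _ _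
    ([set t | t < t0 + 1 /\ x t != 0] `|` [set t | t < t0 + 1 /\ y t != 0])).
    move=> t [tq ne]; have [x0|x0] := eqVneq (x t) 0; last by left.
    by right; split => //; rewrite -x0 eq_sym.
  by rewrite finite_setU; split; apply: lc_lf.
have [s Ds] := (finite_seqP D).1 fD.
have memD t : D t = (t \in s) by rewrite Ds.
have t0s : t0 \in s by rewrite -memD; split => //; rewrite ltrDl.
have [|m ms mm] := seq_has_min (s := s); first by case: s t0s {Ds memD}.
have [mt0 xym] : D m by rewrite memD.
have before u : u < m -> x u = y u.
  move=> um; apply/eqP; apply: contraT => ne.
  have /mm : u \in s by rewrite -memD; split => //; apply: lt_trans um mt0.
  by rewrite leNgt um.
case: (ltgtP (x m) (y m)) => h; [left|right|by move/eqP: xym].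
- by exists m.
- by exists m; split => // u /before ->.
Qed.

Definition lc_ltb (x y : LC) : bool := `[< lex x y >].
Definition lc_leb (x y : LC) : bool := (x == y) || lc_ltb x y.

Lemma lc_lebE x y : lc_leb x y = (x == y) || lc_ltb x y. Proof. by []. Qed.
Lemma lc_ltb_irr : irreflexive lc_ltb.
Proof. by move=> x; apply/asboolP/lex_irr. Qed.
Lemma lc_ltb_trans : transitive lc_ltb.
Proof. by move=> y x z /asboolP xy /asboolP yz; apply/asboolP; apply: lex_trans xy yz. Qed.

HB.instance Definition _ :=
  Order.LtLe_isPOrder.Build (Order.Disp tt tt) LC lc_lebE lc_ltb_irr lc_ltb_trans.

Lemma lc_leb_total : total lc_leb.
Proof.
move=> x y; rewrite /lc_leb; have [->|/eqP/lex_total xy] := eqVneq x y.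
  by apply/orP; left; apply/orP; left; apply/eqP.
by case: xy => h; apply/orP; [left|right]; apply/orP; right; apply/asboolP.
Qed.

HB.instance Definition _ := Order.POrder_isTotal.Build (Order.Disp tt tt) LC lc_leb_total.

Lemma lt_lexP (x y : LC) : x < y <-> lex x y.
Proof. by split => [/asboolP|h]; [|apply/asboolP]. Qed.

Lemma lc_ltE (x y : LC) : lc_lt x y <-> x < y.
Proof.
rewrite lt_lexP /lc_lt /lc_pos; split => -[t [yx eq]]; exists t; split.
- by move: yx; rewrite lc_subE subr_gt0.
- by move=> s /eq/eqP; rewrite lc_subE subr_eq0 => /eqP.
- by rewrite lc_subE subr_gt0.
- by move=> s /eq; rewrite lc_subE => ->; rewrite subrr.
Qed.

Lemma lc_leE (x y : LC) : lc_le x y <-> x <= y.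
Proof.
rewrite /lc_le lc_ltE le_eqVlt.
split => [[->|->]|/orP [/eqP ->|xy]]; [by rewrite orbT|apply/orP; left|by right|by left].
exact/eqP.
Qed.

Lemma lc_ltD2r (x y z : LC) : (x + z < y + z) = (x < y).
Proof.
apply/idP/idP => /lt_lexP [t [xy eq]]; apply/lt_lexP; exists t; split.
- by move: xy; rewrite !lc_addE ltrD2r.
- by move=> s /eq; rewrite !lc_addE => /addIr.
- by rewrite !lc_addE ltrD2r.
- by move=> s /eq; rewrite !lc_addE => ->.
Qed.

Lemma lc_leD2r (x y z : LC) : (x + z <= y + z) = (x <= y).
Proof. by rewrite !leNgt lc_ltD2r. Qed.

Lemma lc_leD2l (x y z : LC) : (z + x <= z + y) = (x <= y).
Proof. by rewrite ![z + _]addrC lc_leD2r. Qed.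

Lemma lc_ltD2l (x y z : LC) : (z + x < z + y) = (x < y).
Proof. by rewrite ![z + _]addrC lc_ltD2r. Qed.

Lemma lc_subr_ge0 (x y : LC) : ((0 : LC) <= y - x) = (x <= y).
Proof. by rewrite -(lc_leD2r _ _ x) add0r subrK. Qed.

Lemma lc_lerBlDr (x y z : LC) : (x - z <= y) = (x <= y + z).
Proof. by rewrite -(lc_leD2r _ _ z) subrK. Qed.

Lemma lc_ltDr (x e : LC) : (0 : LC) < e -> x < x + e.
Proof. by move=> e0; rewrite -{1}(addr0 x) lc_ltD2l. Qed.

Lemma lc_ltBr (x e : LC) : (0 : LC) < e -> x - e < x.
Proof. by move=> e0; rewrite -(lc_ltD2r _ _ e) subrK lc_ltDr. Qed.

Definition agree (q : rat) (x y : LC) := forall t, t <= q -> x t = y t.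

Lemma agree_refl q x : agree q x x. Proof. by []. Qed.

Lemma agree_sym q x y : agree q x y -> agree q y x.
Proof. by move=> xy t /xy ->. Qed.

Lemma agree_trans q x y z : agree q x y -> agree q y z -> agree q x z.
Proof. by move=> xy yz t tq; rewrite xy // yz. Qed.

Lemma agree_le q q' x y : q' <= q -> agree q x y -> agree q' x y.
Proof. by move=> q'q xy t tq'; apply: xy; apply: le_trans tq' q'q. Qed.

Lemma agreeD q x y x' y' : agree q x y -> agree q x' y' -> agree q (x + x') (y + y').
Proof. by move=> xy xy' t tq; rewrite !lc_addE xy // xy'. Qed.

Lemma agreeN q x y : agree q x y -> agree q (- x) (- y).
Proof. by move=> xy t tq; rewrite !lc_oppE xy. Qed.

Lemma agreeB q x y x' y' : agree q x y -> agree q x' y' -> agree q (x - x') (y - y').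
Proof. by move=> xy /agreeN; apply: agreeD. Qed.

Lemma agree_lt q t (x y x' y' : LC) : t <= q -> agree q x x' -> agree q y y' ->
  x t < y t -> (forall s, s < t -> x s = y s) -> x' < y'.
Proof.
move=> tq xx' yy' xy eq; apply/lt_lexP; exists t; split; first by rewrite -xx' // -yy'.
move=> s st; have sq : s <= q by apply/ltW/(lt_le_trans st tq).
by rewrite -xx' // -yy' // eq.
Qed.

Lemma agree_antisym q (x x' y y' : LC) : x <= y' -> y <= x' ->
  agree q x x' -> agree q y y' -> agree q x y.
Proof.
move=> xy' yx' xx' yy' t tq; apply: contrapT => ne.
have /lex_total [] : x <> y by move=> exy; apply: ne; rewrite exy.
- move=> [u [xyu eq]]; have ut : u <= t by rewrite leNgt; apply/negP => /eq.
  have := agree_lt (le_trans ut tq) xx' (@agree_refl q y) xyu eq.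
  by rewrite ltNge yx'.
- move=> [u [yxu eq]]; have ut : u <= t by rewrite leNgt; apply/negP => /eq/esym.
  have := agree_lt (le_trans ut tq) yy' (@agree_refl q x) yxu eq.
  by rewrite ltNge xy'.
Qed.

Lemma agree_between q (a b c : LC) : a <= b -> b <= c -> agree q a c -> agree q b a.
Proof. by move=> ab bc ac; apply: agree_antisym bc ab (@agree_refl q b) ac. Qed.

Definition lc_monof (q : rat) : rat -> R := fun t => if t == q then 1 else 0.

Lemma lc_monof_lf q : left_finite (lc_monof q).
Proof.
move=> q'; apply: (@sub_finite_set _ _ [set q]); last exact: finite_set1.
by move=> t [_]; rewrite /lc_monof; case: (t =P q) => [->//|_]; rewrite eqxx.
Qed.

Definition lc_mono q : LC := MkLC (lc_monof_lf q).

Lemma lc_mono_gt0 q : (0 : LC) < lc_mono q.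
Proof.
apply/lt_lexP; exists q; split; first by rewrite /= /lc_monof eqxx ltr01.
by move=> s sq; rewrite /= /lc_monof (lt_eqF sq).
Qed.

Lemma lc_mono_agree0 q q' : q' < q -> agree q' (lc_mono q) 0.
Proof. by move=> q'q t tq'; rewrite /= /lc_monof (lt_eqF (le_lt_trans tq' q'q)). Qed.

Definition cvg_agree (u : nat -> LC) (L : LC) :=
  forall q, exists N, forall n, (N <= n)%N -> agree q (u n) L.

(* Every element of the neighbourhood (L - d^(q+1), L + d^(q+1)) of [L], where
   [d^q = lc_mono q], agrees with [L] up to [q]. *)
Lemma lc_cvgE u L : lc_cvg u L <-> cvg_agree u L.
Proof.
split => [cvgu q|cvgu a b /lc_ltE/lt_lexP [t1 [aL eq1]] /lc_ltE/lt_lexP [t2 [Lb eq2]]].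
- have qq1 : q < q + 1 by rewrite ltrDl.
  have [N HN] := cvgu (L - lc_mono (q + 1)) (L + lc_mono (q + 1))
    ((lc_ltE _ _).2 (lc_ltBr _ (lc_mono_gt0 _))) ((lc_ltE _ _).2 (lc_ltDr _ (lc_mono_gt0 _))).
  have lo : agree q (L - lc_mono (q + 1)) L.
    by move=> t tq; rewrite lc_subE (lc_mono_agree0 qq1) // subr0.
  have hi : agree q (L + lc_mono (q + 1)) L.
    by move=> t tq; rewrite lc_addE (lc_mono_agree0 qq1) // addr0.
  exists N => n /HN [/lc_ltE/ltW lun /lc_ltE/ltW unh].
  exact: agree_trans (agree_between lun unh (agree_trans lo (agree_sym hi))) lo.
- have [N HN] := cvgu (Order.max t1 t2).
  exists N => n /HN uL; split; apply/lc_ltE.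
  + apply: (agree_lt (t := t1) _ (@agree_refl _ a) (agree_sym uL)) => //.
    by rewrite le_max lexx.
  + apply: (agree_lt (t := t2) _ (agree_sym uL) (@agree_refl _ b)) => //.
    by rewrite le_max lexx orbT.
Qed.

Lemma cvg_agree_unique u L M : cvg_agree u L -> cvg_agree u M -> L = M.
Proof.
move=> uL uM; apply: lc_ext => t.
have [N1 H1] := uL t; have [N2 H2] := uM t.
by rewrite -(H1 (maxn N1 N2)) ?leq_maxl // (H2 (maxn N1 N2)) ?leq_maxr.
Qed.

Lemma cvg_agreeD u v L M : cvg_agree u L -> cvg_agree v M ->
  cvg_agree (fun n => u n + v n) (L + M).
Proof.
move=> uL vM q; have [N1 H1] := uL q; have [N2 H2] := vM q.
exists (maxn N1 N2) => n; rewrite geq_max => /andP [n1 n2].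
by apply: agreeD; [apply: H1|apply: H2].
Qed.

Lemma cvg_agree_squeeze u v w L : cvg_agree u L -> cvg_agree w L ->
  (forall n, u n <= v n <= w n) -> cvg_agree v L.
Proof.
move=> uL wL uvw q; have [N1 H1] := uL q; have [N2 H2] := wL q.
exists (maxn N1 N2) => n; rewrite geq_max => /andP [n1 n2].
have /andP [uv vw] := uvw n.
apply: agree_trans (agree_between uv vw _) (H1 _ n1).
exact: agree_trans (H1 _ n1) (agree_sym (H2 _ n2)).
Qed.

Lemma cvg_agree_cauchy u :
  (forall q, exists N, forall n m, (N <= n)%N -> (N <= m)%N -> agree q (u n) (u m)) ->
  exists L, cvg_agree u L.
Proof.
move=> /choice [N HN]; pose Lf t := u (N t) t.
have uLf q t n : t <= q -> (N q <= n)%N -> u n t = Lf t.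
  move=> tq nq; rewrite /Lf (HN q n (N q)) // (HN q (N q) (maxn (N q) (N t))) ?leq_maxl //.
  by rewrite (HN t (maxn (N q) (N t)) (N t)) ?leq_maxr.
have Lf_lf : left_finite Lf.
  move=> q; apply: (@sub_finite_set _ _ [set t | t < q /\ u (N q) t != 0]); last exact: lc_lf.
  by move=> t [tq ne]; split => //; rewrite (uLf q t (N q)) // ltW.
by exists (MkLC Lf_lf) => q; exists (N q) => n nq t tq; exact: uLf tq nq.
Qed.

Lemma lc_psumS (u : nat -> LC) n : lc_psum u n.+1 = lc_psum u n + u n.
Proof. by []. Qed.

Lemma lc_psumD (u v : nat -> LC) n :
  lc_psum (fun k => u k + v k) n = lc_psum u n + lc_psum v n.
Proof.
elim: n => [|n IH]; first by apply: lc_ext => t /=; rewrite addr0.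
by rewrite !lc_psumS IH addrACA.
Qed.

Lemma lc_psum_shift (u : nat -> LC) j n :
  lc_psum (fun k => u (k + j)%N) n = lc_psum u (n + j) - lc_psum u j.
Proof.
elim: n => [|n IH]; first by rewrite add0n subrr.
by rewrite lc_psumS IH addSn lc_psumS addrAC.
Qed.

Definition series_to (u : nat -> LC) s := cvg_agree (lc_psum u) s.

Lemma lc_series_toE u s : lc_series_to u s <-> series_to u s.
Proof. exact: lc_cvgE. Qed.

Lemma series_to_unique u s s' : series_to u s -> series_to u s' -> s = s'.
Proof. exact: cvg_agree_unique. Qed.

Lemma series_to_cvg0 u s : series_to u s -> cvg_agree u 0.
Proof.
move=> us q; have [N HN] := us q; exists N => n nN t tq.
have := HN _ (leqW nN) t tq; rewrite lc_psumS lc_addE HN //.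
by rewrite lc_zeroE => /eqP; rewrite -subr_eq0 addrAC subrr add0r => /eqP.
Qed.

(* Terms agreeing with 0 up to [q] leave the partial sums unchanged up to [q]. *)
Lemma cvg0_series_to u : cvg_agree u 0 -> exists s, series_to u s.
Proof.
move=> u0; apply: cvg_agree_cauchy => q; have [N HN] := u0 q.
have psumN n : (N <= n)%N -> agree q (lc_psum u n) (lc_psum u N).
  elim: n => [|n IH]; first by rewrite leqn0 => /eqP ->.
  rewrite leq_eqVlt => /orP [/eqP <-//|]; rewrite ltnS => nN t tq.
  by rewrite lc_psumS lc_addE (HN n nN t tq) lc_zeroE addr0; apply: IH.
by exists N => n m nN mN; apply: agree_trans (psumN n nN) (agree_sym (psumN m mN)).
Qed.

Lemma series_toD u v s s' : series_to u s -> series_to v s' ->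
  series_to (fun k => u k + v k) (s + s').
Proof.
move=> us vs' q; have [N HN] := cvg_agreeD us vs' q.
by exists N => n /HN; rewrite lc_psumD.
Qed.

Lemma series_to_dominated (u v : nat -> LC) s :
  (forall n, (0 : LC) <= u n <= v n) -> series_to v s -> exists s', series_to u s'.
Proof.
move=> uv vs; apply: cvg0_series_to.
apply: (@cvg_agree_squeeze (fun _ => 0) _ v) => //; last exact: series_to_cvg0 vs.
by move=> q; exists 0%N.
Qed.

Lemma series_to_shift (u : nat -> LC) s j :
  series_to u s -> series_to (fun k => u (k + j)%N) (s - lc_psum u j).
Proof.
move=> us q; have [N HN] := us q; exists N => n nN.
by rewrite lc_psum_shift; apply: agreeB => //; apply/HN/(leq_trans nN)/leq_addr.
Qed.

Lemma series_to_tail (u : nat -> LC) s :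
  series_to u s -> cvg_agree (fun k => s - lc_psum u k.+1) 0.
Proof.
move=> us q; have [N HN] := us q; exists N => k kN.
by rewrite -(subrr s); exact: agreeB (@agree_refl _ s) (HN k.+1 (leqW kN)).
Qed.

Definition interleave T (f g : nat -> T) (k : nat) : T :=
  if odd k then g k./2 else f k./2.

Lemma interleave_even T (f g : nat -> T) n : interleave f g n.*2 = f n.
Proof. by rewrite /interleave odd_double doubleK. Qed.

Lemma interleave_odd T (f g : nat -> T) n : interleave f g n.*2.+1 = g n.
Proof. by rewrite /interleave /= odd_double /= uphalf_double. Qed.

Lemma interleave_comp T U (h : T -> U) f g :
  (fun k => h (interleave f g k)) = interleave (h \o f) (h \o g).
Proof. by apply: funext => k; rewrite /interleave /=; case: odd. Qed.

Lemma bigcup_interleave T I (F : I -> set T) (f g : nat -> I) :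
  \bigcup_n F (f n) `|` \bigcup_n F (g n) `<=` \bigcup_k F (interleave f g k).
Proof.
move=> x [[n _ Fx]|[n _ Gx]]; first by exists n.*2; rewrite ?interleave_even.
by exists n.*2.+1; rewrite ?interleave_odd.
Qed.

Lemma lc_psum_interleave (u v : nat -> LC) k :
  lc_psum (interleave u v) k = lc_psum u (uphalf k) + lc_psum v k./2.
Proof.
elim: k => [|k IH]; first by rewrite /= addr0.
rewrite lc_psumS IH /interleave uphalfE -[k.+1./2]uphalfE uphalf_half.
by case: (odd k); rewrite ?add1n ?add0n !lc_psumS ?addrA // addrAC.
Qed.

Lemma series_to_interleave u v s s' : series_to u s -> series_to v s' ->
  series_to (interleave u v) (s + s').
Proof.
move=> us vs' q; have [N1 H1] := us q; have [N2 H2] := vs' q.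
exists (maxn N1 N2).*2 => k kN; rewrite lc_psum_interleave; apply: agreeD.
  apply: H1; rewrite geq_uphalf_double; apply: leq_trans (leqnSn _).
  by apply: leq_trans kN; rewrite leq_double leq_maxl.
apply: H2; rewrite geq_half_double.
by apply: leq_trans kN; rewrite leq_double leq_maxr.
Qed.

Definition is_glb (E : set LC) m :=
  (forall s, E s -> m <= s) /\ (forall m', (forall s, E s -> m' <= s) -> m' <= m).

Lemma is_infimumE E m : is_infimum E m <-> is_glb E m.
Proof.
by split => -[lb glb]; split => [s /lb/lc_leE //|m' m'lb]; apply/lc_leE/glb => s /m'lb/lc_leE.
Qed.

Lemma is_glb_agree E m q : is_glb E m -> exists2 s, E s & agree q s m.
Proof.
move=> [lb glb]; have qq1 : q < q + 1 by rewrite ltrDl.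
have [s Es ms] : exists2 s, E s & s < m + lc_mono (q + 1).
  apply: contrapT => /forall2NP nE.
  have : m + lc_mono (q + 1) <= m.
    by apply: glb => s Es; case: (nE s) => // /negP; rewrite -leNgt.
  by rewrite leNgt lc_ltDr ?lc_mono_gt0.
exists s => //; apply: agree_between (lb _ Es) (ltW ms) _.
by move=> t tq; rewrite lc_addE (lc_mono_agree0 qq1) // addr0.
Qed.

(* An infimum exists once lower bounds come arbitrarily close to elements:
   the lower bounds attached to ever larger [q] agree with each other on
   ever longer initial segments, and their limit is the infimum. *)
Lemma is_glb_of_agree (E : set LC) :
  (forall q, exists l s, (forall s', E s' -> l <= s') /\ E s /\ agree q l s) ->
  exists m, is_glb E m.
Proof.
move=> approx.
have /choice [f Hf] n : exists p : LC * LC,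
    (forall s, E s -> p.1 <= s) /\ E p.2 /\ agree n%:R p.1 p.2.
  by have [l [s h]] := approx n%:R; exists (l, s).
have f_agree n m : (n <= m)%N -> agree n%:R (f n).1 (f m).1.
  move=> nm; have [lb1 [E1 a1]] := Hf n; have [lb2 [E2 a2]] := Hf m.
  by apply: agree_antisym (lb1 _ E2) (lb2 _ E1) a1 (agree_le _ a2); rewrite ler_nat.
have [L fL] : exists L, cvg_agree (fun n => (f n).1) L.
  apply: cvg_agree_cauchy => q; have [N qN] := rat_le_nat q.
  exists N => n m nN mN; apply: agree_le qN _.
  exact: agree_trans (agree_sym (f_agree _ _ nN)) (f_agree _ _ mN).
have near t : exists n, agree t (f n).1 L /\ agree t (f n).1 (f n).2.
  have [N1 h1] := fL t; have [N2 tN2] := rat_le_nat t.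
  exists (maxn N1 N2); split; first by apply: h1; rewrite leq_maxl.
  have [_ [_ a]] := Hf (maxn N1 N2); apply: agree_le a.
  by apply: le_trans tN2 _; rewrite ler_nat leq_maxr.
exists L; split => [s Es|m' lb]; rewrite leNgt; apply/negP => /lt_lexP [t [lt eq]].
- have [n [a1 _]] := near t; have [lbn _] := Hf n.
  have := lbn _ Es; rewrite leNgt => /negP; apply.
  exact: agree_lt (lexx t) (@agree_refl _ s) (agree_sym a1) lt eq.
- have [n [a1 a2]] := near t; have [_ [En _]] := Hf n.
  have := lb _ En; rewrite leNgt => /negP; apply.
  exact: agree_lt (lexx t) (agree_trans (agree_sym a1) a2) (@agree_refl _ m') lt eq.
Qed.

Definition cover_sums (X : set LC) := [set s | exists S, cover_with_sum X S s].

Lemma Mu_isE X m : Mu_is X m <-> is_glb (cover_sums X) m.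
Proof. exact: is_infimumE. Qed.

Lemma cover_sums_sub X Y s : X `<=` Y -> cover_sums Y s -> cover_sums X s.
Proof. by move=> XY [S [YS Ss]]; exists S; split => //; apply: subset_trans YS. Qed.

Lemma cover_sumsU X Y x y : cover_sums X x -> cover_sums Y y -> cover_sums (X `|` Y) (x + y).
Proof.
move=> [S [XS Sx]] [T [YT Ty]]; exists (interleave S T); split.
  by apply: subset_trans (@bigcup_interleave _ _ (@itv_set R) S T); apply: setUSS.
by apply/lc_series_toE; rewrite (interleave_comp (@itv_len R));
  apply/series_to_interleave; apply/lc_series_toE.
Qed.

Definition posdiff (a b : LC) : LC := if a < b then b - a else 0.

Lemma posdiff_ge0 a b : (0 : LC) <= posdiff a b.
Proof. by rewrite /posdiff; case: ifP => // ab; rewrite lc_subr_ge0 ltW. Qed.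

Lemma posdiff_eq0 a b : b <= a -> posdiff a b = 0.
Proof. by rewrite /posdiff leNgt => /negbTE ->. Qed.

Lemma posdiff_split a b c :
  posdiff a (Order.min b c) + posdiff (Order.max a c) b = posdiff a b.
Proof.
have [ca|ac] := leP c a.
  by rewrite posdiff_eq0 ?add0r // (le_trans _ ca) // ge_min lexx orbT.
have [bc|cb] := leP b c; first by rewrite [posdiff c b]posdiff_eq0 ?addr0.
by rewrite /posdiff ac cb (lt_trans ac cb) addrC addrA subrK.
Qed.

Definition pitv_len (I : pitv LC) := posdiff (pitv_a I) (pitv_b I).

Lemma pitv_len_split c hc I :
  pitv_len (pitv_below c hc I) + pitv_len (pitv_above c hc I) = pitv_len I.
Proof. exact: posdiff_split. Qed.

Definition pitv_of (I : lc_interval R) : pitv LC :=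
  PItv (itv_a I) (itv_b I) (itv_lclosed I) (itv_rclosed I).

Lemma itv_setE I x : itv_set I x <-> pitv_set (pitv_of I) x.
Proof.
by rewrite /itv_set /pitv_set /=; case: (itv_lclosed I); case: (itv_rclosed I);
  rewrite ?lc_leE ?lc_ltE.
Qed.

Lemma itv_lenE I : itv_len I = pitv_len (pitv_of I).
Proof. by rewrite /pitv_len /posdiff /=; have /lc_ltE -> := itv_lt I. Qed.

Lemma itv_set_cut I x : itv_set I x <->
  above (itv_a I) (~~ itv_lclosed I) x /\ below (itv_b I) (itv_rclosed I) x.
Proof. by rewrite itv_setE /pitv_set /above /below /=; case: (itv_lclosed I). Qed.

Lemma pitv_cover_itv (I : pitv LC) e : (0 : LC) < e -> exists J : lc_interval R,
  pitv_set I `<=` itv_set J /\ pitv_len I <= itv_len J <= pitv_len I + e.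
Proof.
case: I => a b l r e0; have [ab|ba] := ltP a b.
  exists (MkItv l r ((lc_ltE a b).2 ab)); split => [x|]; first by rewrite itv_setE.
  by rewrite itv_lenE lexx /= (ltW (lc_ltDr _ e0)).
exists (MkItv true true ((lc_ltE a (a + e)).2 (lc_ltDr a e0))); split.
  move=> x [ax xb]; rewrite itv_setE /pitv_set /=.
  have xa : x <= a by apply: le_trans ba; case: (r) xb => // /ltW.
  by split => //; [case: (l) ax => // /ltW|apply/(le_trans xa)/ltW/lc_ltDr].
rewrite itv_lenE /pitv_len /= (posdiff_eq0 ba) add0r /posdiff lc_ltDr //.
by rewrite addrAC subrr add0r lexx ltW.
Qed.

Definition pcover (X : set LC) (g : nat -> pitv LC) s :=
  X `<=` \bigcup_n pitv_set (g n) /\ series_to (fun n => pitv_len (g n)) s.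

Lemma pcover_of_cover X S s : cover_with_sum X S s -> pcover X (fun n => pitv_of (S n)) s.
Proof.
move=> [XS /lc_series_toE Ss]; split; first by move=> x /XS [n _ /itv_setE]; exists n.
by under eq_fun do rewrite -itv_lenE.
Qed.

Lemma pcover_sub X Y g s : X `<=` Y -> pcover Y g s -> pcover X g s.
Proof. by move=> XY [Yg gs]; split => //; apply: subset_trans Yg. Qed.

Lemma pcoverU X Y g h x y : pcover X g x -> pcover Y h y ->
  pcover (X `|` Y) (interleave g h) (x + y).
Proof.
move=> [Xg gx] [Yh hy]; split; last by rewrite (interleave_comp pitv_len); apply: series_to_interleave.
by apply: subset_trans (@bigcup_interleave _ _ (@pitv_set _ _) g h); apply: setUSS.
Qed.

Lemma pcover_split X g s c hc : pcover X g s -> exists x y,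
  [/\ pcover (X `&` below c hc) (fun n => pitv_below c hc (g n)) x,
      pcover (X `&` above c hc) (fun n => pitv_above c hc (g n)) y & x + y = s].
Proof.
move=> [Xg gs].
have [x gx] : exists x, series_to (fun n => pitv_len (pitv_below c hc (g n))) x.
  apply: series_to_dominated gs => n; rewrite posdiff_ge0 /=.
  by rewrite -[pitv_len (g n)](pitv_len_split c hc) -{1}[pitv_len _]addr0 lc_leD2l posdiff_ge0.
have [y gy] : exists y, series_to (fun n => pitv_len (pitv_above c hc (g n))) y.
  apply: series_to_dominated gs => n; rewrite posdiff_ge0 /=.
  by rewrite -[pitv_len (g n)](pitv_len_split c hc) -{1}[pitv_len _]add0r lc_leD2r posdiff_ge0.
exists x, y; split.
- by split => // z [/Xg [n _ gz] cz]; exists n => //; apply/pitv_belowE.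
- by split => // z [/Xg [n _ gz] cz]; exists n => //; apply/pitv_aboveE.
- apply: series_to_unique gs; have := series_toD gx gy.
  by under eq_fun do rewrite pitv_len_split.
Qed.

(* Pieces of a cover may be empty; padding the [n]-th one to a genuine
   interval of length at most [d^(q+1+n)] changes the sum only beyond [q]. *)
Lemma pcover_approx X g s q : pcover X g s -> exists2 s', cover_sums X s' & agree q s' s.
Proof.
move=> [Xg gs]; pose e n := lc_mono (q + 1 + n%:R).
have /choice [J gJ] n := pitv_cover_itv (g n) (lc_mono_gt0 (q + 1 + n%:R)).
pose d n := itv_len (J n) - pitv_len (g n).
have d_bounds n : (0 : LC) <= d n <= e n.
  by have [_ /andP [gJ1 gJ2]] := gJ n; rewrite lc_subr_ge0 gJ1 lc_lerBlDr addrC.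
have d_agree0 n : agree q (d n) 0.
  have /andP [d0 de] := d_bounds n.
  apply: (agree_between d0 de); apply/agree_sym/lc_mono_agree0.
  have : (0 : rat) <= n%:R by rewrite ler0n.
  lra.
have [D dD] : exists D, series_to d D.
  apply/cvg0_series_to/(@cvg_agree_squeeze (fun _ => 0) _ e) => // [q'|q'].
    by exists 0%N.
  have [N q'N] := rat_le_nat (q' - q); exists N => n nN.
  apply: lc_mono_agree0; have : (N%:R : rat) <= n%:R by rewrite ler_nat.
  lra.
have D0 : agree q D 0.
  have psum0 n : agree q (lc_psum d n) 0.
    by elim: n => // n IH; rewrite lc_psumS -[0 : LC]addr0; apply: agreeD.
  by have [N dN] := dD q; apply: agree_trans (agree_sym (dN N (leqnn N))) (psum0 N).
exists (s + D); last by rewrite -[s in agree _ _ s]addr0; apply: agreeD.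
exists J; split; first by move=> x /Xg [n _ /(gJ n).1 Jx]; exists n.
apply/lc_series_toE; have := series_toD gs dD.
by under eq_fun do rewrite addrC subrK.
Qed.

Lemma cover_sums_split_itv A (I : lc_interval R) s q : cover_sums A s -> exists x y,
  [/\ cover_sums (A `&` itv_set I) x, cover_sums (A `\` itv_set I) y & agree q (x + y) s].
Proof.
move=> [S /pcover_of_cover AS].
have [x1 [r [g1 gr e1]]] := pcover_split (itv_a I) (~~ itv_lclosed I) AS.
have [x2 [x3 [g2 g3 e2]]] := pcover_split (itv_b I) (itv_rclosed I) gr.
have AI : A `&` itv_set I `<=`
    (A `&` above (itv_a I) (~~ itv_lclosed I)) `&` below (itv_b I) (itv_rclosed I).
  by move=> z [Az /itv_set_cut [az zb]].
have AnI : A `\` itv_set I `<=` (A `&` below (itv_a I) (~~ itv_lclosed I)) `|`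
    ((A `&` above (itv_a I) (~~ itv_lclosed I)) `&` above (itv_b I) (itv_rclosed I)).
  move=> z [Az nIz]; have [az|/aboveP az] := pselect (below (itv_a I) (~~ itv_lclosed I) z).
    by left.
  by right; split => //; apply/aboveP => zb; apply: nIz; apply/itv_set_cut.
have [x Sx xx2] := pcover_approx q (pcover_sub AI g2).
have [y Sy yx13] := pcover_approx q (pcover_sub AnI (pcoverU g1 g3)).
by exists x, y; split => //; rewrite -e1 -e2 addrCA; apply: agreeD.
Qed.

(* [M_u(A) - x] is a lower bound for the cover sums of [A \ I] whenever [x] is
   a cover sum of [A ∩ I]; splitting near-optimal covers of [A] makes it
   agree with a cover sum of [A \ I] up to any given [q]. *)
Lemma outer_measurable_setD_itv A (I : lc_interval R) :
  outer_measurable A -> outer_measurable (A `\` itv_set I).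
Proof.
move=> [m /Mu_isE mA]; have [m' AIm'] : exists m', is_glb (cover_sums (A `\` itv_set I)) m'.
  apply: is_glb_of_agree => q; have [s As sm] := is_glb_agree q mA.
  have [x [y [AIx AIy xys]]] := cover_sums_split_itv I q As.
  exists (m - x), y; split; [|split] => // [y' AIy'|].
    rewrite lc_lerBlDr addrC; apply: mA.1; apply: cover_sums_sub (cover_sumsU AIx AIy').
    by move=> z Az; have [Iz|nIz] := pselect (itv_set I z); [left|right].
  have := agreeB (agree_trans (agree_sym sm) (agree_sym xys)) (@agree_refl q x).
  by rewrite addrAC subrr add0r.
by exists m'; apply/Mu_isE.
Qed.

Lemma outer_measurable_setD_bigcup_le A (I : nat -> lc_interval R) k :
  outer_measurable A ->
  outer_measurable (A `\` \bigcup_(n in [set n | (n <= k)%N]) itv_set (I n)).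
Proof.
move=> mA; elim: k => [|k IH]; first by rewrite bigcup_le0; apply: outer_measurable_setD_itv.
by rewrite bigcup_leS -setDDl; apply: outer_measurable_setD_itv.
Qed.

Lemma cover_sums_tail (I : nat -> lc_interval R) s k :
  series_to (fun n => itv_len (I n)) s ->
  cover_sums (\bigcup_(n in [set n | (k < n)%N]) itv_set (I n))
             (s - lc_psum (fun n => itv_len (I n)) k.+1).
Proof.
move=> Is; exists (fun n => I (n + k.+1)%N); split.
  by move=> x [n kn Inx]; exists (n - k.+1)%N => //; rewrite subnK.
exact/lc_series_toE/series_to_shift.
Qed.

(* [M k - t k <= M_u(B) <= M k], and the lower bounds [M k - t k] of the cover
   sums of [B] approach cover sums of [B]. *)
Lemma is_glb_cvg_shrink (B : set LC) (A C : nat -> set LC) (M t : nat -> LC) :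
  (forall k, B `<=` A k) -> (forall k, A k `<=` B `|` C k) ->
  (forall k, cover_sums (C k) (t k)) -> cvg_agree t 0 ->
  (forall k, is_glb (cover_sums (A k)) (M k)) ->
  exists2 L, is_glb (cover_sums B) L & cvg_agree M L.
Proof.
move=> BA ABC Ct t0 MA.
have lb k y : cover_sums B y -> M k - t k <= y.
  move=> By; rewrite lc_lerBlDr; apply: (MA k).1.
  exact: cover_sums_sub (ABC k) (cover_sumsU By (Ct k)).
have Mt_agree q k : agree q (t k) 0 -> agree q (M k - t k) (M k).
  by move=> tk0; rewrite -{2}(subr0 (M k)); exact: agreeB (@agree_refl q (M k)) tk0.
have [L BL] : exists L, is_glb (cover_sums B) L.
  apply: is_glb_of_agree => q; have [K tK] := t0 q.
  have [s AKs sM] := is_glb_agree q (MA K).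
  exists (M K - t K), s; split; [exact: lb|split; first exact: cover_sums_sub (BA K) AKs].
  exact: agree_trans (Mt_agree q K (tK K (leqnn K))) (agree_sym sM).
exists L => // q; have [K tK] := t0 q; exists K => k kK.
have MtL : M k - t k <= L by apply: BL.2 => y; apply: lb.
have LM : L <= M k by apply: (MA k).2 => y /(cover_sums_sub (BA k)) /BL.1.
have MtM := Mt_agree q k (tK k kK).
exact: agree_sym (agree_trans (agree_between MtL LM MtM) MtM).
Qed.

End LeviCivita.

Theorem lemma3p1 (R : realType) (A : set (LC R)) (I : nat -> lc_interval R) :
  outer_measurable A ->
  (forall n m : nat, n <> m -> itv_set (I n) `&` itv_set (I m) = set0) ->
  lc_cvg (fun n => itv_len (I n)) (lc_zero R) ->
  outer_measurable (A `\` \bigcup_n itv_set (I n)) /\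
  exists (M : nat -> LC R) (L : LC R),
    (forall k : nat, Mu_is (A `\` \bigcup_(n in [set n : nat | (n <= k)%N]) itv_set (I n)) (M k)) /\
    lc_cvg M L /\
    Mu_is (A `\` \bigcup_n itv_set (I n)) L.
Proof.
move=> mA _ /lc_cvgE len0.
have /choice [M AM] := fun k => outer_measurable_setD_bigcup_le I k mA.
have [s Is] := cvg0_series_to len0.
have [L BL ML] := is_glb_cvg_shrink
  (fun k => setDS (bigcup_subset (subsetT _)))
  (fun k => @setD_bigcup_le_sub _ A _ k)
  (fun k => cover_sums_tail k Is) (series_to_tail Is) (fun k => (Mu_isE _ _).1 (AM k)).
split; first by exists L; apply/Mu_isE.
by exists M, L; split => //; split; [apply/lc_cvgE|apply/Mu_isE].
Qed.
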